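(* Let $G=(\sigma,\mu)$ be a complete f-graph with $|\sigma^*|=n$, and let $e=pq\in\mu^*$. Then the f-graph $G/_{pq}=(\sigma_c,\mu_c)$ obtained by fuzzy vertex pooling of $p$ and $q$ is a complete f-graph.
   Context: A f-graph is a triple $G=(\zeta,\sigma,\mu)$ (written $G=(\sigma,\mu)$) with $\sigma:\zeta\to[0,1]$, $\mu:\zeta\times\zeta\to[0,1]$ symmetric, such that $\mu(pq)\le\sigma(p)\wedge\sigma(q)$ for all $p,q$ ($\wedge$ = minimum). $\sigma^*=\{v:\sigma(v)>0\}$ is the vertex set and $\mu^*=\{pq:\mu(pq)>0\}$ the edge set; $N(p)=\{w:\mu(wp)>0\}$. A f-graph is complete (a CFG) if $\mu(uv)=\sigma(u)\wedge\sigma(v)$ for all distinct $u,v\in\sigma^*$. Fuzzy vertex pooling: for distinct $p,q\in\sigma^*$, $G/_{pq}=(\sigma_c,\mu_c)$ has vertex set $(\sigma^*\setminus\{p,q\})\cup\{v_c\}$ with $v_c$ a new vertex; $\sigma_c(v)=\sigma(v)$ for $v\ne v_c$ and $\sigma_c(v_c)=\sigma(p)\wedge\sigma(q)$; for $u,w\in\sigma^*\setminus\{p,q\}$, $\mu_c(uw)=\mu(uw)$; for $w\in\sigma^*\setminus\{p,q\}$, $\mu_c(wv_c)=\mu(wp)$ if $w\in N(p)\setminus N(q)$, $\mu_c(wv_c)=\mu(wq)$ if $w\in N(q)\setminus N(p)$, $\mu_c(wv_c)=\mu(wp)\wedge\mu(wq)$ if $w\in N(p)\cap N(q)$, and $\mu_c(wv_c)=0$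 otherwise (the edge $pq$, if present, disappears). *)

From HB Require Import structures.
From mathcomp Require Import all_boot all_order all_algebra.
Set Implicit Arguments. Unset Strict Implicit. Unset Printing Implicit Defensive.
Import Order.TTheory GRing.Theory Num.Theory.
Local Open Scope ring_scope.

Section FGraph.
Variable R : realFieldType.

Definition is_fgraph (T : Type) (sigma : T -> R) (mu : T -> T -> R) : Prop :=
  (forall v, 0 <= sigma v <= 1) /\
  (forall u v, 0 <= mu u v <= 1) /\
  (forall u v, mu u v = mu v u) /\
  (forall u v, mu u v <= Num.min (sigma u) (sigma v)).

Definition is_complete_fgraph (T : eqType) (sigma : T -> R) (mu : T -> T -> R)
  : Prop :=
  is_fgraph sigma mu /\
  (forall u v, u != v -> 0 < sigma u -> 0 < sigma v ->
     mu u v = Num.min (sigma u) (sigma v)).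

(* Fuzzy vertex pooling of p and q.  The new universe is option T:
   Some v is the old vertex v, None is the new vertex v_c.
   The old vertices p and q are removed (membership value 0). *)
Definition pool_sigma (T : eqType) (sigma : T -> R) (p q : T) (x : option T) : R :=
  match x with
  | None => Num.min (sigma p) (sigma q)
  | Some v => if (v == p) || (v == q) then 0 else sigma v
  end.

Definition pool_edge (T : eqType) (mu : T -> T -> R) (p q w : T) : R :=
  let inNp := 0 < mu w p in
  let inNq := 0 < mu w q in
  if inNp && ~~ inNq then mu w p
  else if inNq && ~~ inNp then mu w q
  else if inNp && inNq then Num.min (mu w p) (mu w q)
  else 0.

Definition pool_mu (T : eqType) (mu : T -> T -> R) (p q : T) (x y : option T) : R :=
  match x, y with
  | Some u, Some w =>
      if [|| u == p, u == q, w == p | w == q] then 0 else mu u w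
  | Some w, None | None, Some w =>
      if (w == p) || (w == q) then 0 else pool_edge mu p q w
  | None, None => 0
  end.

End FGraph.

Definition vertex_set (R : realFieldType) (T : finType) (sigma : T -> R) : {set T} :=
  [set v | 0 < sigma v].

From mathcomp Require Import all_boot all_order all_algebra.
Import Order.TTheory GRing.Theory Num.Theory.
Local Open Scope ring_scope.

(* In a complete f-graph every pair of distinct vertices, even one of
   membership 0, carries the edge value [min (sigma u) (sigma v)].  As pq is
   an edge, sigma p and sigma q are positive, so a vertex w outside {p, q} is
   joined to p and to q by edges that are both positive or both zero; either
   way pooling gives it the value [min (sigma w) (min (sigma p) (sigma q))]
   towards the new vertex, which is what completeness of the pooled graph
   demands. *)

Lemma fgraph_intro (R : realFieldType) (T : Type)
    (sigma : T -> R) (mu : T -> T -> R) :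
  (forall v, 0 <= sigma v <= 1) -> (forall u v, 0 <= mu u v) ->
  (forall u v, mu u v = mu v u) ->
  (forall u v, mu u v <= Num.min (sigma u) (sigma v)) ->
  is_fgraph sigma mu.
Proof.
move=> sigma01 mu_ge0 mu_sym mu_le; split=> //; split=> [u v|//].
rewrite mu_ge0 (le_trans (mu_le u v)) // ge_min.
by case/andP: (sigma01 u) => _ ->.
Qed.

Section FuzzyVertexPooling.
Variables (R : realFieldType) (T : eqType) (sigma : T -> R) (mu : T -> T -> R).
Hypothesis fg : is_fgraph sigma mu.

Lemma complete_fgraph_min :
  (forall u v, u != v -> 0 < sigma u -> 0 < sigma v ->
     mu u v = Num.min (sigma u) (sigma v)) ->
  forall u v, u != v -> mu u v = Num.min (sigma u) (sigma v).
Proof.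
move=> mu_complete u v uv; have [sigma01 [mu01 [_ mu_le]]] := fg.
have [/andP [su sv] | ] := boolP ((0 < sigma u) && (0 < sigma v)).
  exact: mu_complete.
rewrite negb_and -!leNgt => sigma_le0.
have min_le0 : Num.min (sigma u) (sigma v) <= 0 by rewrite ge_min.
apply/eqP; rewrite eq_le mu_le /= (le_trans min_le0) //.
by case/andP: (mu01 u v).
Qed.

Variables p q : T.

Lemma pool_sigma_bounds x : 0 <= pool_sigma sigma p q x <= 1.
Proof.
have [sigma01 _] := fg; case: x => [v|] /=.
  by case: ifP => _; rewrite ?lexx ?ler01.
case/andP: (sigma01 p) => sp0 sp1; case/andP: (sigma01 q) => sq0 _.
by rewrite le_min sp0 sq0 ge_min sp1.
Qed.

Lemma pool_sigma_ge0 x : 0 <= pool_sigma sigma p q x.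
Proof. by case/andP: (pool_sigma_bounds x). Qed.

Lemma pool_mu_sym x y : pool_mu mu p q x y = pool_mu mu p q y x.
Proof.
have [_ [_ [mu_sym _]]] := fg.
by case: x y => [u|] [w|] //=; rewrite mu_sym; do 4 case: (_ == _).
Qed.

Hypothesis mu_complete : forall u v, u != v -> 0 < sigma u -> 0 < sigma v ->
  mu u v = Num.min (sigma u) (sigma v).
Hypothesis pooled_vertex_gt0 : 0 < Num.min (sigma p) (sigma q).

Lemma pool_edge_complete w : w != p -> w != q ->
  pool_edge mu p q w = Num.min (sigma w) (Num.min (sigma p) (sigma q)).
Proof.
move=> wp wq; have [sigma01 _] := fg.
have := pooled_vertex_gt0; rewrite lt_min => /andP [sp sq].
rewrite /pool_edge !complete_fgraph_min //.
have [sw | ] := ltP 0 (sigma w).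
  by rewrite !lt_min sw sp sq /= minACA minxx.
case/andP: (sigma01 w) => sw0 _ sw_le0.
have -> : sigma w = 0 by apply/eqP; rewrite eq_le sw_le0 sw0.
have min0l (x : R) : 0 <= x -> Num.min 0 x = 0 by move/min_idPl.
by rewrite !min0l ?ltxx ?le_min ?(ltW sp) ?(ltW sq).
Qed.

Lemma pool_mu_complete x y : x != y ->
  pool_mu mu p q x y =
  Num.min (pool_sigma sigma p q x) (pool_sigma sigma p q y).
Proof.
case: x y => [u|] [w|] //= xy.
- case: ifP => [|/norP [up /norP [uq /norP [wp wq]]]].
    by case/or4P => /eqP ->; rewrite eqxx ?orbT
      ?(min_idPl (pool_sigma_ge0 (Some w))) ?(min_idPr (pool_sigma_ge0 (Some u))).
  rewrite (negbTE up) (negbTE uq) (negbTE wp) (negbTE wq).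
  by apply: complete_fgraph_min => //; apply: contraNneq xy => ->.
- case: ifP => [_|/norP [up uq]]; last exact: pool_edge_complete.
  by rewrite (min_idPl (pool_sigma_ge0 None)).
- case: ifP => [_|/norP [wp wq]]; last by rewrite pool_edge_complete // minC.
  by rewrite (min_idPr (pool_sigma_ge0 None)).
Qed.

Lemma pool_mu_bounds x y :
  0 <= pool_mu mu p q x y <=
  Num.min (pool_sigma sigma p q x) (pool_sigma sigma p q y).
Proof.
have [<- | xy] := eqVneq x y; last first.
  by rewrite pool_mu_complete // lexx le_min !pool_sigma_ge0.
have [_ [mu01 [_ mu_le]]] := fg; rewrite minxx.
case: x => [u|] /=; last by rewrite lexx (pool_sigma_ge0 None).
case: (u == p); case: (u == q); rewrite /= ?lexx //.
by case/andP: (mu01 u u) => -> _; rewrite (le_trans (mu_le u u)) // minxx.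
Qed.

Theorem pool_complete_fgraph :
  is_complete_fgraph (pool_sigma sigma p q) (pool_mu mu p q).
Proof.
split; last by move=> x y xy _ _; exact: pool_mu_complete.
apply: fgraph_intro => [|x y|x y|x y]; first exact: pool_sigma_bounds.
- by case/andP: (pool_mu_bounds x y).
- exact: pool_mu_sym.
- by case/andP: (pool_mu_bounds x y).
Qed.

End FuzzyVertexPooling.

Theorem mainTheorem1 (R : realFieldType) (T : finType) (n : nat)
  (sigma : T -> R) (mu : T -> T -> R) (p q : T) :
  is_complete_fgraph sigma mu ->
  #|vertex_set sigma|%N = n ->
  p != q -> 0 < mu p q ->
  is_complete_fgraph (pool_sigma sigma p q) (pool_mu mu p q).
Proof.
move=> [fg mu_complete] _ _ mu_pq.
have [_ [_ [_ mu_le]]] := fg.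
exact: (@pool_complete_fgraph R T sigma mu fg p q mu_complete
          (lt_le_trans mu_pq (mu_le p q))).
Qed.
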